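(* The run-length encoding of $(a(n))_{n\ge 0}$ is the sequence $1,\,2-\mathbf f[0],\,2-\mathbf f[1],\,2-\mathbf f[2],\,\ldots$ (OEIS A001468).
   Context: Let $(F_n)_{n\ge 0}$ be the Fibonacci numbers: $F_0=0$, $F_1=1$, $F_n=F_{n-1}+F_{n-2}$ for $n\ge 2$. Define $(a(n))_{n\ge 0}$ (OEIS A105774) by $a(0)=0$, $a(1)=1$, and for $n\ge 2$, $a(n)=F_{j+1}-a(n-F_j)$, where $j\ge 2$ is the unique index with $F_j<n\le F_{j+1}$. The run-length encoding of a sequence is the sequence of lengths of its successive maximal blocks of consecutive equal terms. $\mathbf f=\mathbf f[0]\mathbf f[1]\mathbf f[2]\cdots=01001010\cdots$ is the infinite Fibonacci word, the fixed point of the morphism $0\mapsto 01$, $1\mapsto 0$. *)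

From mathcomp Require Import all_boot all_order all_algebra.
Set Implicit Arguments. Unset Strict Implicit. Unset Printing Implicit Defensive.
Import GRing.Theory Num.Theory.
Local Open Scope ring_scope.

Fixpoint fib (n : nat) : nat :=
  match n with
  | 0 => 0
  | 1 => 1
  | (m.+1 as p).+1 => (fib p + fib m)%N
  end.

(* The unique index j >= 2 with F_j < n <= F_{j+1} (for n >= 2);
   such a j is < n+2, so searching in [0, n+2) suffices. *)
Definition fibidx (n : nat) : nat :=
  find (fun j => (1 < j) && (fib j < n <= fib j.+1))%N (iota 0 n.+2).

(* a(0)=0, a(1)=1, a(n) = F_{j+1} - a(n - F_j) for n >= 2  (OEIS A105774).
   Values are taken in int so that the subtraction is genuine. [fuel]
   only guarantees termination; fuel n.+1 is enough for argument n. *)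
Fixpoint a_fuel (fuel n : nat) : int :=
  match fuel with
  | 0 => 0
  | fuel'.+1 =>
      if (n <= 1)%N then (n%:Z)
      else (fib (fibidx n).+1)%:Z - a_fuel fuel' (n - fib (fibidx n))%N
  end.

Definition a105774 (n : nat) : int := a_fuel n.+1 n.

Definition fibmorph (w : seq nat) : seq nat :=
  flatten (map (fun c => if c == 0%N then [:: 0%N; 1%N] else [:: 0%N]) w).

(* f[k]: the k-th letter of the infinite Fibonacci word, the fixed point of
   fibmorph; iter k.+1 fibmorph [::0] is a prefix of it of length >= k+1. *)
Definition fibword (k : nat) : nat := nth 0%N (iter k.+1 fibmorph [:: 0%N]) k.

(* r is the run-length encoding of the sequence u : nat -> T:
   with block starts s k = r 0 + ... + r (k-1), every r k is positive,
   u is constant on each block [s k, s (k+1)) and changes value at each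
   block boundary (so the blocks are the maximal constant blocks). *)
Definition is_rle (T : eqType) (u : nat -> T) (r : nat -> nat) : Prop :=
  let s := fun k => (\sum_(i < k) r i)%N in
  (forall k, (0 < r k)%N) /\
  (forall k m, (s k <= m)%N -> (m.+1 < s k.+1)%N -> u m.+1 = u m) /\
  (forall k, u (s k.+1).-1 != u (s k.+1)).

From mathcomp Require Import all_boot all_order all_algebra.
From mathcomp Require Import zify.
Set Implicit Arguments. Unset Strict Implicit. Unset Printing Implicit Defensive.
Import GRing.Theory Num.Theory.

(* The prefixes W_N = φ^N(0) of the Fibonacci word satisfy W_{N+2} = W_{N+1} W_N,
   so f[F_j + t] = f[t] for t < F_{j-1}; the recursion for a has the same shape,
   a(F_j + t) = F_{j+1} - a(t), so by induction a(m+1) = a(m) iff f[m] = 1.  At the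
   boundaries m = F_j one has f[F_j] = 0, and indeed a(F_j + 1) = F_{j+1} - 1
   exceeds F_j >= a(F_j).  Finally the blocks of lengths 2 - f[k] after the initial
   block of length 1 start at 1 + |φ(f[0..k-1])|; in φ(f) = f the letter there is 0,
   followed by a 1 when f[k] = 0. *)

Lemma fibSS n : fib n.+2 = (fib n.+1 + fib n)%N. Proof. by []. Qed.

Lemma fib_pred_sum j : (0 < j)%N -> fib j.+1 = (fib j + fib j.-1)%N.
Proof. by case: j. Qed.

Lemma leq_fibS n : (fib n <= fib n.+1)%N.
Proof. by case: n => [|n] //; rewrite fibSS leq_addr. Qed.

Lemma leq_fib m n : (m <= n)%N -> (fib m <= fib n)%N.
Proof.
move=> /subnK <-; elim: (n - m)%N => [|d IH] //.
by rewrite addSn (leq_trans IH (leq_fibS _)).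
Qed.

Lemma lt_fib_index m n : (fib m < fib n)%N -> (m < n)%N.
Proof. by rewrite !ltnNge; apply: contra => /leq_fib. Qed.

Lemma fib_gt0 n : (0 < n)%N -> (0 < fib n)%N.
Proof. by move=> n_gt0; apply: leq_trans (leq_fib n_gt0). Qed.

Lemma ltn_fibSS n : (n < fib n.+2)%N.
Proof. by elim: n => [|n IH] //; rewrite fibSS; have := fib_gt0 (ltn0Sn n); lia. Qed.

Lemma fib_bracket n : (2 <= n)%N ->
  exists2 j, (2 <= j)%N & (fib j < n <= fib j.+1)%N.
Proof.
elim: n => [|n IH] //; case: (ltnP n 2) => [n_lt2 nS_ge2 | n_ge2 _].
  by exists 2%N => //; have -> : n = 1%N by lia.
have [j j_ge2 /andP[lt_n le_n]] := IH n_ge2.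
case: (ltnP n (fib j.+1)) => lt_nS; first by exists j => //; apply/andP; split; lia.
exists j.+1; first lia.
by rewrite fibSS; have := fib_gt0 (ltnW j_ge2); lia.
Qed.

Lemma fib_bracket_uniq n i j : (fib i < n <= fib i.+1)%N ->
  (fib j < n <= fib j.+1)%N -> i = j.
Proof.
move=> /andP[lt_i le_i] /andP[lt_j le_j].
by case: (ltngtP i j) => // ltij; have := leq_fib ltij; lia.
Qed.

Lemma fibidxE n j : (2 <= j)%N -> (fib j < n <= fib j.+1)%N -> fibidx n = j.
Proof.
move=> j_ge2 bracket_j.
have lt_j_nSS : (j < n.+2)%N.
  have := ltn_fibSS (j - 2); rewrite -[(j - 2).+2]addn2 subnK //.
  by case/andP: bracket_j; lia.
rewrite /fibidx -(subnKC (ltnW lt_j_nSS)) iotaD find_cat.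
have -> : has (fun i => (1 < i)%N && (fib i < n <= fib i.+1)%N) (iota 0 j) = false.
  apply/hasPn => i; rewrite mem_iota add0n => /andP[_ lt_ij].
  by apply/negP => /andP[_ /fib_bracket_uniq/(_ bracket_j)]; lia.
rewrite size_iota add0n.
have -> : (n.+2 - j = (n.+2 - j).-1.+1)%N by lia.
by rewrite /= j_ge2 bracket_j addn0.
Qed.

Lemma fibidx_bracket n : (2 <= n)%N ->
  (2 <= fibidx n)%N /\ (fib (fibidx n) < n <= fib (fibidx n).+1)%N.
Proof. by move=> /fib_bracket[j j_ge2 bracket_j]; rewrite (fibidxE j_ge2 bracket_j). Qed.

Definition fibletter (c : nat) : seq nat := if c == 0%N then [:: 0%N; 1%N] else [:: 0%N].

Lemma fibmorph_cons c w : fibmorph (c :: w) = fibletter c ++ fibmorph w.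
Proof. by []. Qed.

Lemma fibmorph_cat u v : fibmorph (u ++ v) = fibmorph u ++ fibmorph v.
Proof. by rewrite /fibmorph map_cat flatten_cat. Qed.

Lemma fibmorph_binary w : all (fun c => c <= 1)%N (fibmorph w).
Proof.
by elim: w => [|c w IH] //; rewrite fibmorph_cons all_cat IH andbT /fibletter; case: ifP.
Qed.

Definition fibpref (N : nat) : seq nat := iter N fibmorph [:: 0%N].

Lemma fibprefS N : fibpref N.+1 = fibmorph (fibpref N). Proof. by []. Qed.

Lemma fibprefSS N : fibpref N.+2 = fibpref N.+1 ++ fibpref N.
Proof. by elim: N => [|N IH] //; rewrite [LHS]fibprefS [in LHS]IH fibmorph_cat. Qed.

Lemma size_fibpref N : size (fibpref N) = fib N.+2.
Proof. by elim/ltn_ind: N => [[|[|N]]] IH //; rewrite fibprefSS size_cat !IH. Qed.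

Lemma ltn_size_fibpref N : (N < size (fibpref N))%N.
Proof. by rewrite size_fibpref ltn_fibSS. Qed.

Lemma fibpref_prefix N M : exists v, fibpref (M + N) = fibpref N ++ v.
Proof.
elim: M => [|M [v IH]]; first by exists [::]; rewrite cats0.
have [u ->] : exists u, fibpref (M + N).+1 = fibpref (M + N) ++ u.
  by case: (M + N)%N => [|K]; [exists [:: 1%N] | exists (fibpref K); rewrite fibprefSS].
by exists (v ++ u); rewrite IH catA.
Qed.

Lemma nth_fibpref_leq N M i : (N <= M)%N -> (i < size (fibpref N))%N ->
  nth 0%N (fibpref M) i = nth 0%N (fibpref N) i.
Proof.
move=> /subnK <- lt_i; have [v ->] := fibpref_prefix N (M - N).
by rewrite nth_cat lt_i.
Qed.

Lemma nth_fibpref N i : (i < size (fibpref N))%N -> nth 0%N (fibpref N) i = fibword i.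
Proof.
move=> lt_i; rewrite /fibword -/(fibpref i.+1).
case: (leqP N i.+1) => [le_N | lt_N]; first by rewrite (nth_fibpref_leq le_N lt_i).
by rewrite (nth_fibpref_leq (ltnW lt_N) (ltnW (ltn_size_fibpref i.+1))).
Qed.

Lemma fibword_le1 i : (fibword i <= 1)%N.
Proof.
rewrite /fibword iterS; set w := iter i fibmorph _.
case: (ltnP i (size (fibmorph w))) => [lt_i | ge_i]; last by rewrite nth_default.
by move/all_nthP: (fibmorph_binary w); apply.
Qed.

Lemma fibword_shift j t : (3 <= j)%N -> (t < fib j.-1)%N ->
  fibword (fib j + t) = fibword t.
Proof.
move=> /subnK <-; rewrite addn3 succnK; move: (j - 3)%N => N lt_t.
have size_N1 : size (fibpref N.+1) = fib N.+3 by rewrite size_fibpref.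
rewrite -[fibword t](@nth_fibpref N) ?size_fibpref //.
rewrite -(@nth_fibpref N.+2); last by rewrite size_fibpref [fib N.+4]fibSS; lia.
by rewrite fibprefSS nth_cat size_N1 ltnNge leq_addr addKn.
Qed.

Lemma fibword_fib j : (4 <= j)%N -> fibword (fib j) = 0%N.
Proof. by move=> j_ge4; rewrite -[fib j]addn0 fibword_shift ?fib_gt0 //; lia. Qed.

Lemma size_fibmorph_take w j : (j <= size w)%N ->
  size (fibmorph (take j w)) = (\sum_(i < j) (if nth 0%N w i == 0%N then 2 else 1))%N.
Proof.
elim: j => [|j IH] le_j; first by rewrite take0 big_ord0.
rewrite (take_nth 0%N) // -cats1 fibmorph_cat size_cat IH ?(ltnW le_j) // big_ord_recr /=.
by rewrite fibmorph_cons cats0 /fibletter; case: ifP.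
Qed.

Lemma nth_fibmorph_block w j : (j < size w)%N ->
  let p := size (fibmorph (take j w)) in
  [/\ (p < size (fibmorph w))%N, nth 0%N (fibmorph w) p = 0%N &
      (nth 0%N w j = 0%N -> nth 0%N (fibmorph w) p.+1 = 1%N)].
Proof.
move=> lt_j p.
have -> : fibmorph w = fibmorph (take j w) ++ fibletter (nth 0%N w j) ++ fibmorph (drop j.+1 w).
  by rewrite -{1}(cat_take_drop j w) fibmorph_cat (drop_nth 0%N) // fibmorph_cons.
rewrite size_cat !nth_cat -/p ltnn subnn [(p.+1 < p)%N]ltnNge leqnSn subSnn.
by rewrite /fibletter; case: eqP => c0 /=; split => //; lia.
Qed.

Section A105774.
Local Open Scope ring_scope.

Lemma a_fuelS f n : a_fuel f.+1 n =
  if (n <= 1)%N then n%:Z else (fib (fibidx n).+1)%:Z - a_fuel f (n - fib (fibidx n))%N.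
Proof. by []. Qed.

Lemma a_fuel_enough f f' n : (n < f)%N -> (n < f')%N -> a_fuel f n = a_fuel f' n.
Proof.
elim: f f' n => [|f IH] [|f'] n // lt_f lt_f'; rewrite !a_fuelS.
case: ifP => // /negbT n_gt1.
have [j_ge2 /andP[lt_n _]] := fibidx_bracket (ltac:(lia) : (2 <= n)%N).
have fibj_gt0 := fib_gt0 (ltnW j_ge2).
by congr (_ - _); apply: IH; lia.
Qed.

Lemma a105774_small n : (n <= 1)%N -> a105774 n = n%:Z.
Proof. by case: n => [|[|]]. Qed.

Lemma a105774_rec n j : (2 <= j)%N -> (fib j < n <= fib j.+1)%N ->
  a105774 n = (fib j.+1)%:Z - a105774 (n - fib j)%N.
Proof.
move=> j_ge2 bracket_j; have /andP[lt_n _] := bracket_j.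
have fibj_gt0 := fib_gt0 (ltnW j_ge2).
rewrite /a105774 a_fuelS ifN; last by lia.
by rewrite (fibidxE j_ge2 bracket_j); congr (_ - _); apply: a_fuel_enough; lia.
Qed.

Lemma a105774_range n :
  0 <= a105774 n /\ forall k, (n <= fib k)%N -> a105774 n <= (fib k)%:Z.
Proof.
elim/ltn_ind: n => n IH; case: (leqP n 1) => [n_le1 | n_gt1].
  by rewrite a105774_small //; split => // k le_k; rewrite lez_nat; lia.
have [j_ge2 /andP[lt_n le_n]] := fibidx_bracket n_gt1.
set j := fibidx n in j_ge2 lt_n le_n *.
rewrite (a105774_rec j_ge2 (introT andP (conj lt_n le_n))).
have fibj_gt0 := fib_gt0 (ltnW j_ge2).
have [ge0_rest le_rest] := IH (n - fib j)%N ltac:(lia).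
have rest_le := le_rest j.+1 ltac:(lia).
split; first lia.
move=> k le_k; have le_jSk : (j.+1 <= k)%N.
  by case: (leqP j.+1 k) => //; rewrite ltnS => /leq_fib; lia.
by have := leq_fib le_jSk; lia.
Qed.

Lemma a105774_shift j t : (3 <= j)%N -> (0 < t <= fib j.-1)%N ->
  a105774 (fib j + t) = (fib j.+1)%:Z - a105774 t.
Proof.
move=> j_ge3 /andP[t_gt0 le_t]; rewrite (@a105774_rec _ j) ?addKn //; first lia.
by rewrite fib_pred_sum; lia.
Qed.

Lemma a105774_succ_eq m : (a105774 m.+1 == a105774 m) = (fibword m == 1%N).
Proof.
elim/ltn_ind: m => m IH.
case: m IH => [|[|[|m]]] IH; [by vm_compute|by vm_compute|by vm_compute|].
set n := m.+3 in IH *.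
have [j j_ge2 /andP[lt_nS le_nS]] := fib_bracket (ltac:(lia) : (2 <= n.+1)%N).
have fibjS := fib_pred_sum (ltnW j_ge2).
have fibj_gt0 := fib_gt0 (ltnW j_ge2).
case: (ltnP (fib j) n) => [lt_n | ge_n].
  have j_ge3 : (3 <= j)%N by rewrite -ltnS; apply: (@lt_fib_index 3); rewrite [fib 3]/=; lia.
  have IH_t := IH (n - fib j)%N ltac:(lia).
  have -> : n = (fib j + (n - fib j))%N by lia.
  rewrite -addnS !a105774_shift ?fibword_shift; [|lia..].
  by rewrite -IH_t (inj_eq (addrI _)) (inj_eq oppr_inj).
have n_fib : n = fib j by lia.
have j_ge4 : (4 <= j)%N by apply: (@lt_fib_index 3); rewrite [fib 3]/=; lia.
rewrite n_fib fibword_fib // (@a105774_rec _ j) ?subSnn ?(@a105774_small 1) //; last lia.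
have [_ le_fib] := a105774_range (fib j).
have a_fibj_le := le_fib j (leqnn _).
have fibj1_ge2 : (2 <= fib j.-1)%N by apply: (@leq_fib 3); lia.
by rewrite fibjS [(0 == 1)%N]/=; apply/negbTE/eqP; lia.
Qed.

End A105774.

Definition fibrun (k : nat) : nat := if k is k'.+1 then (2 - fibword k')%N else 1%N.

Lemma fibrun_block_start N j : (j <= size (fibpref N))%N ->
  (\sum_(i < j.+1) fibrun i)%N = (size (fibmorph (take j (fibpref N)))).+1.
Proof.
move=> le_j; rewrite big_ord_recl size_fibmorph_take // add1n; congr S.
apply: eq_bigr => i _; rewrite /bump /= nth_fibpref; last exact: leq_trans le_j.
by have := fibword_le1 i; case: (fibword i) => [|[|]].
Qed.

Lemma fibrun_gt0 k : (0 < fibrun k)%N.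
Proof. by case: k => [|k] //=; have := fibword_le1 k; lia. Qed.

Lemma a105774_const_on_blocks k m :
  (\sum_(i < k) fibrun i <= m)%N -> (m.+1 < \sum_(i < k.+1) fibrun i)%N ->
  a105774 m.+1 = a105774 m.
Proof.
case: k => [|k]; first by rewrite big_ord_recr big_ord0 /=; lia.
have lt_k : (k < size (fibpref k.+2))%N := ltnW (ltnW (ltn_size_fibpref k.+2)).
rewrite (big_ord_recr k.+1) /= (fibrun_block_start (ltnW lt_k)) => ge_m lt_mS.
have fk0 : fibword k = 0%N by have := fibword_le1 k; lia.
have [_ _ next1] := nth_fibmorph_block lt_k.
rewrite -fibprefS nth_fibpref // in next1.
have m_eq : m = (size (fibmorph (take k (fibpref k.+2)))).+1 by lia.
have := next1 fk0; rewrite -m_eq => fpref_m.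
have lt_m : (m < size (fibpref k.+3))%N.
  by case: (ltnP m (size (fibpref k.+3))) => // ge_m'; rewrite nth_default in fpref_m.
by apply/eqP; rewrite a105774_succ_eq -(nth_fibpref lt_m) fpref_m.
Qed.

Lemma a105774_changes_at_blocks k :
  a105774 (\sum_(i < k.+1) fibrun i).-1 != a105774 (\sum_(i < k.+1) fibrun i).
Proof.
have lt_k : (k < size (fibpref k.+1))%N := ltnW (ltn_size_fibpref k.+1).
rewrite (fibrun_block_start (ltnW lt_k)) /=.
have [lt_p f_p _] := nth_fibmorph_block lt_k.
rewrite -fibprefS in lt_p f_p; rewrite nth_fibpref // in f_p.
by rewrite eq_sym a105774_succ_eq f_p.
Qed.

Theorem theorem19 :
  is_rle a105774 (fun k => if k is k'.+1 then (2 - fibword k')%N else 1%N).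
Proof.
split; [exact: fibrun_gt0 | split].
- exact: a105774_const_on_blocks.
- exact: a105774_changes_at_blocks.
Qed.
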